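(* Let $\omega\ge2$ and let $\Gamma$ be an $\omega$-clique regular finite simple graph with vertices $v_1,\dots,v_n$, adjacency matrix $A$ and degree matrix $D=\mathrm{diag}(d(v_1),\dots,d(v_n))$, and with cliques of order $\omega$ listed $c_1,\dots,c_m$. Let $A_C$ be the adjacency matrix of $C_\omega(\Gamma)$ in this order, and let $R$ be the $n\times m$ matrix with $R_{ij}=1$ if $v_i\in c_j$ and $R_{ij}=0$ otherwise. Then (1) $R^TR=A_C+\omega I_m$, and (2) $RR^T=A+\frac{1}{\omega-1}D$.
   Context: A graph is $\omega$-clique regular if it has a nonempty edge set and every edge lies in exactly one clique of order $\omega$. $C_\omega(\Gamma)$ has as vertices the cliques of order $\omega$ of $\Gamma$, two distinct ones adjacent iff they have nonempty intersection. *)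

From HB Require Import structures.
From mathcomp Require Import all_boot all_order all_algebra.
Set Implicit Arguments. Unset Strict Implicit. Unset Printing Implicit Defensive.
Import GRing.Theory Num.Theory.
Local Open Scope ring_scope.

Definition simple_graph (T : finType) (e : rel T) : Prop :=
  symmetric e /\ irreflexive e.

Definition is_clique (T : finType) (e : rel T) (c : {set T}) : bool :=
  [forall x in c, forall y in c, (x != y) ==> e x y].

Definition omega_clique (T : finType) (e : rel T) (w : nat) (c : {set T}) : bool :=
  is_clique e c && (#|c| == w)%N.

Definition clique_regular (T : finType) (e : rel T) (w : nat) : Prop :=
  (exists x y, e x y) /\
  forall x y, e x y ->
    #|[set c : {set T} | omega_clique e w c && (x \in c) && (y \in c)]| = 1%N.

Definition adj_mx (R : nzRingType) (n : nat) (e : rel 'I_n) : 'M[R]_n :=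
  \matrix_(i, j) (e i j)%:R.

Definition degree (T : finType) (e : rel T) (x : T) : nat := #|[set y | e x y]|.

Definition deg_mx (R : nzRingType) (n : nat) (e : rel 'I_n) : 'M[R]_n :=
  diag_mx (\row_i (degree e i)%:R).

Definition clique_graph_adj_mx (R : nzRingType) (n m : nat)
  (c : 'I_m -> {set 'I_n}) : 'M[R]_m :=
  \matrix_(j, k) ((j != k) && (c j :&: c k != set0))%:R.

Definition incidence_mx (R : nzRingType) (n m : nat)
  (c : 'I_m -> {set 'I_n}) : 'M[R]_(n, m) :=
  \matrix_(i, j) (i \in c j)%:R.

From HB Require Import structures.
From mathcomp Require Import all_boot all_order all_algebra.
Set Implicit Arguments. Unset Strict Implicit. Unset Printing Implicit Defensive.
Import GRing.Theory Num.Theory.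
Local Open Scope ring_scope.

(* Entry (j, k) of R^T R counts the vertices shared by c_j and c_k, and entry
   (i, k) of R R^T counts the cliques containing both v_i and v_k.  Two distinct
   w-cliques share at most one vertex, since a shared edge would lie in both;
   two distinct vertices lie in a common w-clique iff they are adjacent, and
   then in exactly one.  On the diagonal, double counting the pairs (y, S) with
   y <> x and x, y in the w-clique S gives d(x) = (w - 1) #{S | x in S}. *)

Lemma sum_nat_bool_card (T : finType) (P : pred T) :
  (\sum_x (P x : nat))%N = #|[set x | P x]|.
Proof.
by rewrite -sum1dep_card [RHS]big_mkcond; apply: eq_bigr => x _; case: (P x).
Qed.

Lemma is_clique_edge (T : finType) (e : rel T) (S : {set T}) (x y : T) :
  is_clique e S -> x \in S -> y \in S -> x != y -> e x y.
Proof.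
move=> /forall_inP S_clique xS yS.
by move/forall_inP/(_ y yS): (S_clique x xS) => /implyP.
Qed.

Lemma card_omega_clique (T : finType) (e : rel T) (w : nat) (S : {set T}) :
  omega_clique e w S -> #|S| = w.
Proof. by case/andP=> _ /eqP. Qed.

Section CliqueRegular.

Variables (T : finType) (e : rel T) (w : nat).
Hypothesis creg : clique_regular e w.

Lemma omega_clique_through_edge_uniq (S1 S2 : {set T}) (x y : T) :
  e x y -> omega_clique e w S1 -> omega_clique e w S2 ->
  x \in S1 -> y \in S1 -> x \in S2 -> y \in S2 -> S1 = S2.
Proof.
move=> exy S1w S2w xS1 yS1 xS2 yS2.
have /eqP := creg.2 x y exy; rewrite eqn_leq => /andP[/card_le1_eqP S_uniq _].
by apply: S_uniq; rewrite inE ?S1w ?S2w ?xS1 ?yS1 ?xS2 ?yS2.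
Qed.

Lemma card_omega_cliques_meet (S1 S2 : {set T}) :
  omega_clique e w S1 -> omega_clique e w S2 -> S1 != S2 ->
  #|S1 :&: S2| = (S1 :&: S2 != set0) :> nat.
Proof.
move=> S1w S2w S12.
have [-> | meet] := eqVneq (S1 :&: S2) set0; first exact: cards0.
apply/eqP; rewrite eqn_leq card_gt0 meet andbT.
apply/card_le1_eqP => x y /setIP[xS1 xS2] /setIP[yS1 yS2].
have [// | xy] := eqVneq x y; case/eqP: S12.
have exy := is_clique_edge (andP S1w).1 xS1 yS1 xy.
exact: omega_clique_through_edge_uniq exy S1w S2w xS1 yS1 xS2 yS2.
Qed.

Lemma card_omega_cliques_through_pair (x y : T) : x != y ->
  #|[set S | omega_clique e w S && (x \in S) && (y \in S)]| = e x y :> nat.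
Proof.
move=> xy; case exy: (e x y); first exact: creg.2.
apply/eqP; rewrite cards_eq0; apply/set0Pn => -[S].
rewrite inE => /andP[/andP[Sw xS] yS].
by rewrite (is_clique_edge (andP Sw).1 xS yS xy) in exy.
Qed.

Hypothesis e_irr : irreflexive e.

Lemma degree_omega_cliques (x : T) :
  degree e x = ((w - 1) * #|[set S | omega_clique e w S & x \in S]|)%N.
Proof.
pose through_x S := omega_clique e w S && (x \in S).
have count_y y : (e x y : nat) = (\sum_S (through_x S && (y \in S :\ x)))%N.
  have [-> | yx] := eqVneq y x.
    by rewrite e_irr big1 // => S _; rewrite !inE eqxx andbF.
  rewrite eq_sym in yx.
  rewrite sum_nat_bool_card -(card_omega_cliques_through_pair yx).
  by apply: eq_card => S; rewrite !inE eq_sym yx.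
rewrite /degree -sum_nat_bool_card (eq_bigr _ (fun y _ => count_y y)).
rewrite exchange_big -sum_nat_bool_card big_distrr /=; apply: eq_bigr => S _.
rewrite -/(through_x S); case xS: (through_x S); last by rewrite muln0 big1.
rewrite muln1 sum_nat_bool_card -(card_omega_clique (andP xS).1).
rewrite (cardsD1 x S) (andP xS).2 add1n subSS subn0.
by apply: eq_card => y; rewrite !inE.
Qed.

End CliqueRegular.

Lemma card_enum_cliques (T I : finType) (e : rel T) (w : nat)
    (c : I -> {set T}) (P : pred {set T}) :
  injective c -> (forall S, omega_clique e w S <-> exists j, c j = S) ->
  #|[set j | P (c j)]| = #|[set S | omega_clique e w S & P S]|.
Proof.
move=> c_inj c_enum; rewrite -(card_imset _ c_inj).
apply: eq_card => S; rewrite [RHS]inE.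
apply/imsetP/andP => [[j] | [/c_enum[j <-] PS]].
  by rewrite inE => Pcj ->; split; first by apply/c_enum; exists j.
by exists j; rewrite ?inE.
Qed.

Section IncidenceMatrix.

Variables (R : nzRingType) (n m : nat) (c : 'I_m -> {set 'I_n}).

Lemma incidence_tr_mulE (j k : 'I_m) :
  ((incidence_mx R c)^T *m incidence_mx R c) j k = #|c j :&: c k|%:R.
Proof.
rewrite !mxE -[X in X%:R]sum_nat_bool_card natr_sum.
by apply: eq_bigr => i _; rewrite !mxE -natrM mulnb.
Qed.

Lemma incidence_mul_trE (i k : 'I_n) :
  (incidence_mx R c *m (incidence_mx R c)^T) i k
    = #|[set j | (i \in c j) && (k \in c j)]|%:R.
Proof.
rewrite !mxE -[X in X%:R]sum_nat_bool_card natr_sum.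
by apply: eq_bigr => j _; rewrite !mxE -natrM mulnb.
Qed.

End IncidenceMatrix.

Theorem lemma4 (R : numFieldType) (n m w : nat) (e : rel 'I_n)
  (c : 'I_m -> {set 'I_n}) :
  (2 <= w)%N ->
  simple_graph e ->
  clique_regular e w ->
  injective c ->
  (forall S : {set 'I_n}, omega_clique e w S <-> exists j, c j = S) ->
  (incidence_mx R c)^T *m incidence_mx R c
    = clique_graph_adj_mx R c + (w%:R)%:M
  /\ incidence_mx R c *m (incidence_mx R c)^T
    = adj_mx R e + (w%:R - 1)^-1 *: deg_mx R e.
Proof.
move=> w_ge2 [_ e_irr] creg c_inj c_enum.
have cw j : omega_clique e w (c j) by apply/c_enum; exists j.
split; apply/matrixP.
  move=> j k; rewrite incidence_tr_mulE !mxE.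
  have [<- | jk] := eqVneq j k.
    by rewrite setIid (card_omega_clique (cw j)) add0r mulr1n.
  by rewrite (card_omega_cliques_meet creg) ?(inj_eq c_inj) // mulr0n addr0.
move=> i k; rewrite incidence_mul_trE !mxE.
rewrite (card_enum_cliques (fun S => (i \in S) && (k \in S)) c_inj c_enum).
have [<- | ik] := eqVneq i k.
  rewrite e_irr add0r mulr1n (degree_omega_cliques creg e_irr).
  rewrite natrM (natrB _ (ltnW w_ge2)).
  rewrite mulrA mulVf ?mul1r; last by rewrite subr_eq0 pnatr_eq1 gtn_eqF.
  by congr (_%:R); apply: eq_card => S; rewrite !inE andbb.
rewrite mulr0n mulr0 addr0 -(card_omega_cliques_through_pair creg ik).
by congr (_%:R); apply: eq_card => S; rewrite !inE andbA.
Qed.
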